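(* Let $n\ge 0$ and $\mathbf{x}\in\mathbb{R}^{n+1}$ with $0\le\mathbf{x}_0<\mathbf{x}_1<\dots<\mathbf{x}_n\le 1$. Define the $(n+1)\times(n+1)$ matrices (indices $0\le i,j\le n$) $$H^n_{ij}=\binom{n+1}{i+j+1},\qquad \widetilde H^n_{ij}(\mathbf{x})=\sum_{k=0}^{i+j+1}(-1)^{n-k+1}\binom{n-k+1}{n-i-j}\sigma_{n-k+1}(\mathbf{x}),$$ $$T^n_{ij}=\binom{n+1}{j-i},\qquad \widetilde T^n_{ij}(\mathbf{x})=\sum_{k=0}^{j-i}(-1)^{n-k+1}\binom{n-k+1}{j-i-k}\sigma_{n-k+1}(\mathbf{x}),$$ $$D^n(\mathbf{x})=\mathrm{diag}\Big(\prod_{i\in\{0,\dots,n\}\setminus\{j\}}(\mathbf{x}_j-\mathbf{x}_i)\Big)_{j=0}^n,\qquad \Delta^n=\mathrm{diag}\Big(\binom{n}{j}\Big)_{j=0}^n,$$ and $\widetilde V^n_{ij}(\mathbf{x})=\mathbf{x}_i^j(1-\mathbf{x}_i)^{n-j}$. Then $$(V^n(\mathbf{x}))^{-1}=(\Delta^n)^{-1}\big[\widetilde H^n(\mathbf{x})T^n-H^n\widetilde T^n(\mathbf{x})\big](\widetilde V^n(\mathbf{x}))^T(D^n(\mathbf{x}))^{-1}.$$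
   Context: $V^n(\mathbf{x})$ is the Bernstein–Vandermonde matrix with entries $V^n_{ij}(\mathbf{x})=B^n_j(\mathbf{x}_i)$, where $B^n_j(x)=\binom{n}{j}x^j(1-x)^{n-j}$. $\sigma_k(\mathbf{x})$ is the $k$-th elementary symmetric function of $\mathbf{x}_0,\dots,\mathbf{x}_n$: $\sigma_0=1$ and $\sigma_k(\mathbf{x})=\sum_{0\le i_0<\dots<i_{k-1}\le n}\mathbf{x}_{i_0}\cdots\mathbf{x}_{i_{k-1}}$ for $1\le k\le n+1$. Conventions: $\binom{a}{b}=0$ if $b<0$ or $b>a$ (in particular $T^n,\widetilde T^n$ are upper triangular, and empty sums are $0$); $0^0=1$. *)

From HB Require Import structures.
From mathcomp Require Import all_boot all_order all_algebra.
Set Implicit Arguments. Unset Strict Implicit. Unset Printing Implicit Defensive.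
Import Order.TTheory GRing.Theory Num.Theory.
Local Open Scope ring_scope.

Definition binz (a b : int) : nat :=
  match a, b with
  | Posz a', Posz b' => 'C(a', b')
  | _, _ => 0%N
  end.

Section Defs.
Variable (R : fieldType) (n : nat) (x : 'I_n.+1 -> R).

Definition esym (k : nat) : R :=
  \sum_(A : {set 'I_n.+1} | #|A| == k) \prod_(i in A) x i.

Definition esymz (k : int) : R :=
  match k with Posz k' => esym k' | Negz _ => 0 end.

Definition signz (m : int) : R := (-1) ^ m.

Definition BV : 'M[R]_n.+1 :=
  \matrix_(i, j) ('C(n, j)%:R * x i ^+ j * (1 - x i) ^+ (n - j)).

Definition BVt : 'M[R]_n.+1 :=
  \matrix_(i, j) (x i ^+ j * (1 - x i) ^+ (n - j)).

Definition Hmx : 'M[R]_n.+1 :=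
  \matrix_(i, j) (binz n.+1 (i + j + 1)%N)%:R.

Definition Htmx : 'M[R]_n.+1 :=
  \matrix_(i < n.+1, j < n.+1)
    \sum_(k < (i + j + 1).+1)
      signz (n%:Z - k%:Z + 1) * (binz (n%:Z - k%:Z + 1) (n%:Z - i%:Z - j%:Z))%:R
        * esymz (n%:Z - k%:Z + 1).

Definition Tmx : 'M[R]_n.+1 :=
  \matrix_(i, j) (binz n.+1 (j%:Z - i%:Z))%:R.

(* sum over 0 <= k <= j - i (empty when j < i) *)
Definition Ttmx : 'M[R]_n.+1 :=
  \matrix_(i < n.+1, j < n.+1)
    \sum_(k < n.+1 | k%:Z <= j%:Z - i%:Z)
      signz (n%:Z - k%:Z + 1) * (binz (n%:Z - k%:Z + 1) (j%:Z - i%:Z - k%:Z))%:R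
        * esymz (n%:Z - k%:Z + 1).

Definition Dmx : 'M[R]_n.+1 :=
  diag_mx (\row_j \prod_(i < n.+1 | i != j) (x j - x i)).

Definition Deltamx : 'M[R]_n.+1 :=
  diag_mx (\row_(j < n.+1) ('C(n, j))%:R).

End Defs.

From Pilot Require Import Defs.
From HB Require Import structures.
From mathcomp Require Import all_boot all_order all_algebra.
From mathcomp Require Import zify ring.
Set Implicit Arguments. Unset Strict Implicit. Unset Printing Implicit Defensive.
Import Order.TTheory GRing.Theory Num.Theory.
Local Open Scope ring_scope.

(* Let W(t) = prod_i (t - x_i) = sum_k c_k t^k, so that c_k =
   (-1)^(n+1-k) sigma_(n+1-k)(x) (Vieta).  All entries of the four auxiliary
   matrices are values of two sequences: H and T are built from
   g(b) = C(n+1, b), while Htilde and Ttilde are built from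
   f(a) = sum_k c_k C(n+1-k, a-k), the coordinates of W(u) in the basis
   u^a (1-u)^(n+1-a).  Hence M := Htilde T - H Ttilde is the Bezoutian
     M_ij = sum_l f(i+l+1) g(j-l) - g(i+l+1) f(j-l).
   The core of the proof is a telescoping identity valid in any commutative
   ring, for homogeneous generating functions F, G of f, g of degree n+1:
     (u q - v p) sum_ij M_ij u^i v^(n-i) p^j q^(n-j)
        = F(u,v) G(p,q) - F(p,q) G(u,v).
   Taking u = x_a, v = 1 - x_a, p = t, q = 1 - t gives F = W, G = 1, hence
   (x_a - t) (row a of Vtilde) M (Vtilde column at t) = W(x_a) - W(t) = -W(t);
   so the bilinear form equals prod_(i != a) (t - x_i), and evaluating at
   t = x_b yields Vtilde M Vtilde^T = D.  As V = Vtilde Delta, the claimed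
   formula for V^-1 follows once x is injective. *)

Definition hmon (S : comPzRingType) (m : nat) (u v : S) (i : nat) : S :=
  u ^+ i * v ^+ (m - i).

Definition hgen (S : comPzRingType) (m : nat) (f : nat -> S) (u v : S) : S :=
  \sum_(a < m.+1) f a * hmon m u v a.

Lemma eq_hgen (S : comPzRingType) m (f g : nat -> S) (u v : S) :
  f =1 g -> hgen m f u v = hgen m g u v.
Proof. by move=> fg; apply: eq_bigr => a _; rewrite fg. Qed.

Section Bezoutian.
Variables (S : comPzRingType) (n : nat).

(* The Bezoutian of two sequences; for f = Htilde's and g = H's sequence it is
   the (i, j) entry of Htilde T - H Ttilde. *)
Definition bezoutian (f g : nat -> S) (i j : nat) : S := \sum_(l < n.+1)
  (f (i + l + 1)%N * (if (l <= j)%N then g (j - l)%N else 0) -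
   g (i + l + 1)%N * (if (l <= j)%N then f (j - l)%N else 0)).

Section PairSum.
Variables u v p q : S.

(* After regrouping the Bezoutian form by (a, b) = (i + l + 1, j - l), the
   coefficient of f(a) g(b) is pair_sum a b. *)
Definition pair_sum (a b : nat) : S :=
  \sum_(l < minn a (n.+1 - b)) hmon n u v (a - 1 - l) * hmon n p q (b + l).

(* The telescoping antiderivative of the terms of pair_sum a b. *)
Definition pair_term (a b l : nat) : S :=
  u ^+ (a - l) * v ^+ (n.+1 - a + l) * p ^+ (b + l) * q ^+ (n.+1 - b - l).

Lemma pair_term_step a b l : (a <= n.+1)%N -> (l < a)%N -> (l < n.+1 - b)%N ->
  (u * q - v * p) * (hmon n u v (a - 1 - l) * hmon n p q (b + l)) =
  pair_term a b l - pair_term a b l.+1.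
Proof.
move=> ha hla hlb; rewrite /hmon /pair_term.
have -> : (a - l = (a - 1 - l).+1)%N by lia.
have -> : (n.+1 - a + l = n - (a - 1 - l))%N by lia.
have -> : (n.+1 - b - l = (n - (b + l)).+1)%N by lia.
have -> : (a - l.+1 = a - 1 - l)%N by lia.
have -> : (n.+1 - a + l.+1 = (n - (a - 1 - l)).+1)%N by lia.
have -> : (b + l.+1 = (b + l).+1)%N by lia.
have -> : (n.+1 - b - l.+1 = n - (b + l))%N by lia.
rewrite !exprS; ring.
Qed.

Lemma pair_sum_telescope a b m :
  (a <= n.+1)%N -> (m <= a)%N -> (m <= n.+1 - b)%N ->
  (u * q - v * p) * \sum_(l < m) hmon n u v (a - 1 - l) * hmon n p q (b + l) =
  pair_term a b 0 - pair_term a b m.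
Proof.
move=> ha; elim: m => [|m IH] hma hmb; first by rewrite big_ord0 mulr0 subrr.
rewrite big_ord_recr /= mulrDr IH ?(ltnW hma) ?(ltnW hmb) // pair_term_step //.
by rewrite addrA subrK.
Qed.

(* The telescoped sums for (a, b) and (b, a) end at the same term, so their
   difference only sees the two boundary terms. *)
Lemma pair_sum_antisym a b : (a <= n.+1)%N -> (b <= n.+1)%N ->
  (u * q - v * p) * (pair_sum a b - pair_sum b a) =
  hmon n.+1 u v a * hmon n.+1 p q b - hmon n.+1 u v b * hmon n.+1 p q a.
Proof.
move=> ha hb; rewrite mulrBr /pair_sum !pair_sum_telescope ?geq_minl ?geq_minr //.
have -> : pair_term a b (minn a (n.+1 - b)) = pair_term b a (minn b (n.+1 - a)).
  by rewrite /pair_term; congr (_ ^+ _ * _ ^+ _ * _ ^+ _ * _ ^+ _); lia.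
rewrite /pair_term /hmon !subn0 !addn0; ring.
Qed.

End PairSum.

Lemma sum_shift_up (h : nat -> S) l : (l < n.+1)%N ->
  (forall a, (n.+1 < a)%N -> h a = 0) ->
  \sum_(i < n.+1) h (i + l.+1)%N = \sum_(a < n.+2) (if (l < a)%N then h a else 0).
Proof.
move=> hl hz.
rewrite -(big_mkord xpredT (fun i => h (i + l.+1)%N)).
rewrite -(big_mkord xpredT (fun a => if (l < a)%N then h a else 0)).
have := big_addn 0 (n.+1 + l.+1) l.+1 xpredT h; rewrite addnK add0n => <-.
rewrite (@big_cat_nat _ _ _ n.+2) /=; [|lia|lia].
rewrite [RHS](@big_cat_nat _ _ _ l.+1) /=; [|lia|lia].
rewrite [X in _ + X = _]big_nat_cond [X in _ + X = _]big1 ?addr0; last first.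
  by move=> i /andP[/andP[h1 h2] _]; apply: hz.
rewrite [X in _ = X + _]big_nat_cond [X in _ = X + _]big1 ?add0r; last first.
  by move=> i /andP[/andP[h1 h2] _]; rewrite ltnNge -ltnS h2.
by apply: eq_big_nat => i /andP[-> _].
Qed.

Lemma sum_shift_down (h : nat -> S) l : (l < n.+1)%N ->
  \sum_(j < n.+1) (if (l <= j)%N then h j else 0) =
  \sum_(b < n.+2) (if (l < n.+1 - b)%N then h (b + l)%N else 0).
Proof.
move=> hl.
rewrite -(big_mkord xpredT (fun j => if (l <= j)%N then h j else 0)).
rewrite -(big_mkord xpredT (fun b => if (l < n.+1 - b)%N then h (b + l)%N else 0)).
rewrite (@big_cat_nat _ _ _ l) /=; [|lia|lia].
rewrite [RHS](@big_cat_nat _ _ _ (n.+1 - l)) /=; [|lia|lia].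
rewrite [X in X + _ = _]big_nat_cond [X in X + _ = _]big1 ?add0r; last first.
  by move=> i /andP[/andP[h1 h2] _]; rewrite leqNgt h2.
rewrite [X in _ = _ + X]big_nat_cond [X in _ = _ + X]big1 ?addr0; last first.
  by move=> i /andP[/andP[h1 h2] _]; have -> : (l < n.+1 - i)%N = false by lia.
rewrite (@eq_big_nat _ _ _ l n.+1 _ h); last by move=> i /andP[-> _].
have := big_addn 0 n.+1 l xpredT h; rewrite add0n => ->.
by apply: eq_big_nat => i /andP[h1 h2]; have -> : (l < n.+1 - i)%N by lia.
Qed.

Lemma bezoutian_half_regroup (u v p q : S) (f g : nat -> S) :
  (forall a, (n.+1 < a)%N -> f a = 0) ->
  \sum_(i < n.+1) \sum_(j < n.+1) \sum_(l < n.+1)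
     f (i + l + 1)%N * (if (l <= j)%N then g (j - l)%N else 0) *
     hmon n u v i * hmon n p q j
  = \sum_(a < n.+2) \sum_(b < n.+2) f a * g b * pair_sum u v p q a b.
Proof.
move=> hf.
transitivity (\sum_(l < n.+1) \sum_(a < n.+2) \sum_(b < n.+2)
   (if (l < a)%N && (l < n.+1 - b)%N then
      f a * g b * (hmon n u v (a - 1 - l) * hmon n p q (b + l)) else 0)).
  under eq_bigr => i _ do rewrite exchange_big.
  rewrite exchange_big /=; apply: eq_bigr => l _.
  transitivity ((\sum_(i < n.+1) f (i + l.+1)%N * hmon n u v (i + l.+1 - 1 - l)) *
    (\sum_(j < n.+1) (if (l <= j)%N then g (j - l)%N * hmon n p q j else 0))).
    rewrite big_distrlr /=; apply: eq_bigr => i _; apply: eq_bigr => j _.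
    have -> : (i + l.+1 - 1 - l = i)%N by lia.
    by rewrite addn1 addnS; case: ifP => _; ring.
  rewrite (sum_shift_up (h := fun a => f a * hmon n u v (a - 1 - l)) (ltn_ord l));
    last by move=> a ha; rewrite hf // mul0r.
  rewrite (sum_shift_down (fun j => g (j - l)%N * hmon n p q j) (ltn_ord l)).
  rewrite big_distrlr /=; apply: eq_bigr => a _; apply: eq_bigr => b _.
  by rewrite addnK; case: ifP => ha; case: ifP => hb /=; rewrite ?mulr0 ?mul0r //; ring.
rewrite exchange_big /=; apply: eq_bigr => a _.
rewrite exchange_big /=; apply: eq_bigr => b _.
rewrite /pair_sum mulr_sumr (big_ord_widen n.+1
  (fun l => f a * g b * (hmon n u v (a - 1 - l) * hmon n p q (b + l)))); last first.
  by rewrite geq_min leq_subr orbT.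
by rewrite [RHS]big_mkcond /=; apply: eq_bigr => l _; rewrite leq_min.
Qed.

Lemma bezoutian_form (u v p q : S) (f g : nat -> S) :
  (forall a, (n.+1 < a)%N -> f a = 0) -> (forall a, (n.+1 < a)%N -> g a = 0) ->
  (u * q - v * p) *
    \sum_(i < n.+1) \sum_(j < n.+1) bezoutian f g i j * hmon n u v i * hmon n p q j =
  hgen n.+1 f u v * hgen n.+1 g p q - hgen n.+1 f p q * hgen n.+1 g u v.
Proof.
move=> hf hg.
have -> : \sum_(i < n.+1) \sum_(j < n.+1) bezoutian f g i j * hmon n u v i * hmon n p q j =
  \sum_(a < n.+2) \sum_(b < n.+2) f a * g b * (pair_sum u v p q a b - pair_sum u v p q b a).
  transitivity ((\sum_(i < n.+1) \sum_(j < n.+1) \sum_(l < n.+1)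
      f (i + l + 1)%N * (if (l <= j)%N then g (j - l)%N else 0) *
      hmon n u v i * hmon n p q j) -
    (\sum_(i < n.+1) \sum_(j < n.+1) \sum_(l < n.+1)
      g (i + l + 1)%N * (if (l <= j)%N then f (j - l)%N else 0) *
      hmon n u v i * hmon n p q j)).
    rewrite -sumrB; apply: eq_bigr => i _; rewrite -sumrB; apply: eq_bigr => j _.
    by rewrite /bezoutian !mulr_suml -sumrB; apply: eq_bigr => l _; rewrite !mulrBl.
  rewrite !bezoutian_half_regroup // [X in _ - X]exchange_big /= -sumrB.
  apply: eq_bigr => a _; rewrite -sumrB; apply: eq_bigr => b _.
  by rewrite mulrBr (mulrC (g b)).
rewrite /hgen mulr_sumr big_distrlr big_distrlr -sumrB.
apply: eq_bigr => a _; rewrite mulr_sumr -sumrB; apply: eq_bigr => b _.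
rewrite mulrCA (pair_sum_antisym _ _ _ _ (ltn_ord a) (ltn_ord b)).
by generalize (hmon n.+1 u v a) (hmon n.+1 u v b) (hmon n.+1 p q a)
  (hmon n.+1 p q b) (f a) (g b) => A B C D F G /=; ring.
Qed.

End Bezoutian.

Lemma rmorph_bezoutian (S T : comPzRingType) (phi : {rmorphism S -> T}) n
    (f g : nat -> S) i j :
  phi (bezoutian n f g i j) = bezoutian n (phi \o f) (phi \o g) i j.
Proof.
rewrite /bezoutian rmorph_sum; apply: eq_bigr => l _.
by rewrite rmorphB !rmorphM /=; case: ifP; rewrite ?rmorph0.
Qed.

Section BinomialTransform.
Variables (S : comPzRingType) (n : nat).

(* The coordinates, in the basis (u^a v^(n+1-a))_a, of the homogeneous
   polynomial sum_k c_k u^k (u + v)^(n+1-k). *)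
Definition binom_transform (c : nat -> S) (a : nat) : S :=
  \sum_(k < a.+1) c k *+ 'C(n.+1 - k, a - k).

Lemma sum_ord_from (h : nat -> S) k M : (k <= M)%N ->
  \sum_(a < M | (k < a.+1)%N) h a = \sum_(m < M - k) h (m + k)%N.
Proof.
move=> hk; rewrite big_mkcond /=.
rewrite -(big_mkord xpredT (fun a => if (k < a.+1)%N then h a else 0)).
rewrite -(big_mkord xpredT (fun m => h (m + k)%N)).
rewrite (@big_cat_nat _ _ _ k) /=; [|lia|lia].
rewrite [X in X + _ = _]big_nat_cond [X in X + _ = _]big1 ?add0r; last first.
  by move=> i /andP[/andP[h1 h2] _]; rewrite ltnS leqNgt h2.
rewrite (@eq_big_nat _ _ _ k M _ h); last by move=> i /andP[h1 _]; rewrite ltnS h1.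
by have := big_addn 0 M k xpredT h; rewrite add0n => ->.
Qed.

Lemma hgen_binom_transform (c : nat -> S) (u v : S) :
  hgen n.+1 (binom_transform c) u v =
  \sum_(k < n.+2) c k * u ^+ k * (u + v) ^+ (n.+1 - k).
Proof.
pose t k a := c k *+ 'C(n.+1 - k, a - k) * hmon n.+1 u v a.
transitivity (\sum_(a < n.+2) \sum_(k < n.+2) if (k < a.+1)%N then t k a else 0).
  apply: eq_bigr => a _; rewrite /binom_transform mulr_suml.
  by rewrite (big_ord_widen n.+2 (fun k => t k a)) // big_mkcond.
rewrite exchange_big /=; apply: eq_bigr => k _.
rewrite -big_mkcond /= (sum_ord_from (t k)); last exact: ltnW.
rewrite addrC exprDn mulr_sumr.
have -> : (n.+2 - k = (n.+1 - k).+1)%N by have := ltn_ord k; lia.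
apply: eq_bigr => m _; rewrite /t /hmon.
have -> : (m + k - k = m)%N by lia.
have -> : (n.+1 - (m + k) = n.+1 - k - m)%N by lia.
by rewrite exprD ?mulrnAl ?mulrnAr; congr (_ *+ _); ring.
Qed.

Lemma hgen_binomial (u v : S) :
  hgen n.+1 (fun b => ('C(n.+1, b))%:R) u v = (u + v) ^+ n.+1.
Proof.
by rewrite addrC exprDn; apply: eq_bigr => b _; rewrite /hmon mulr_natl mulrC.
Qed.

End BinomialTransform.

Lemma rmorph_binom_transform (S T : comPzRingType) (phi : {rmorphism S -> T})
    n (c : nat -> S) a :
  phi (binom_transform n c a) = binom_transform n (phi \o c) a.
Proof.
by rewrite /binom_transform rmorph_sum; apply: eq_bigr => k _; rewrite rmorphMn.
Qed.

Section NodePolynomial.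
Variables (R : fieldType) (n : nat) (x : 'I_n.+1 -> R).

Definition node_poly : {poly R} := \prod_(i < n.+1) ('X - (x i)%:P).

Lemma node_poly_coef k : (k <= n.+1)%N ->
  node_poly`_k = (-1) ^+ (n.+1 - k) * Defs.esym x (n.+1 - k).
Proof.
move=> le_k; rewrite /node_poly.
under eq_bigr => i _ do rewrite addrC -raddfN/=.
rewrite bigA_distr /= coef_sum.
transitivity (\sum_(I in {set 'I_n.+1}) if #|I| == (n.+1 - k)%N then
                  \prod_(i < n.+1 | i \in I) - x i else 0).
  apply: eq_bigr => I _.
  rewrite big_if/= big_const iter_mulr_1 -rmorph_prod/= coefCM coefXn.
  rewrite -[#|I| == _](eqn_add2r k) subnK//.
  rewrite -[X in (_ + _)%N == X]card_ord -(cardC I) eqn_add2l.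
  by case: ifP; rewrite ?mulr1 ?mulr0.
rewrite -big_mkcond mulr_sumr/= /Defs.esym; apply: eq_big => [I|I /eqP <-] //.
by rewrite prodrN.
Qed.

Lemma size_node_poly : size node_poly = n.+2.
Proof.
by rewrite /node_poly size_prod_XsubC /index_enum unlock -enumT -cardT card_ord.
Qed.

Lemma node_poly_coef_large k : (n.+1 < k)%N -> node_poly`_k = 0.
Proof. by move=> hk; rewrite nth_default // size_node_poly. Qed.

(* The coordinates of W(u) in the basis (u^a (1-u)^(n+1-a))_a: this is the
   sequence underlying Htilde and Ttilde. *)
Definition node_bern : nat -> R := binom_transform n (fun k => node_poly`_k).

(* The sequence underlying H and T. *)
Definition binom_row (b : nat) : R := ('C(n.+1, b))%:R.

Lemma node_bern_large a : (n.+1 < a)%N -> node_bern a = 0.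
Proof.
move=> ha; rewrite /node_bern /binom_transform big1 // => k _.
case: (leqP k n.+1) => hk; last by rewrite node_poly_coef_large // mul0rn.
by rewrite bin_small ?mulr0n //; have := ltn_ord k; lia.
Qed.

Lemma binom_row_large a : (n.+1 < a)%N -> binom_row a = 0.
Proof. by move=> ha; rewrite /binom_row bin_small. Qed.

Lemma hgen_node_bern (w z : {poly R}) : w + z = 1 ->
  hgen n.+1 (fun a => (node_bern a)%:P) w z = node_poly \Po w.
Proof.
move=> wz1; rewrite (eq_hgen _ _ _ (rmorph_binom_transform _ _ _)).
rewrite hgen_binom_transform wz1 comp_polyE size_node_poly.
by apply: eq_bigr => k _; rewrite expr1n mulr1 mul_polyC.
Qed.

Lemma hgen_binom_row (w z : {poly R}) : w + z = 1 ->
  hgen n.+1 (fun b => (binom_row b)%:P) w z = 1.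
Proof.
move=> wz1; rewrite (eq_hgen _ _ _ (fun b => rmorph_nat _ _)).
by rewrite hgen_binomial wz1 expr1n.
Qed.

End NodePolynomial.

Section BezoutianMatrix.
Variables (R : fieldType) (n : nat) (x : 'I_n.+1 -> R).

Lemma sign_esym_coef k : (k <= n.+1)%N ->
  signz R (n%:Z - k%:Z + 1) * esymz x (n%:Z - k%:Z + 1) = (node_poly x)`_k.
Proof.
move=> hk; have -> : n%:Z - k%:Z + 1 = Posz (n.+1 - k) by lia.
by rewrite /signz /esymz -exprnP node_poly_coef.
Qed.

Lemma Htmx_entry (i l : 'I_n.+1) : Htmx x i l = node_bern x (i + l + 1)%N.
Proof.
rewrite mxE /node_bern /binom_transform; apply: eq_bigr => k _ /=.
have hk1 : (k < (i + l + 1).+1)%N := ltn_ord k.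
case: (leqP k n.+1) => hk; last first.
  case E: (n%:Z - k%:Z + 1) => [m|m]; first by exfalso; lia.
  by rewrite /esymz mulr0 node_poly_coef_large // mul0rn.
have -> : n%:Z - k%:Z + 1 = Posz (n.+1 - k) by lia.
case: (leqP (i + l) n) => hil; last first.
  case E: (n%:Z - i%:Z - l%:Z) => [m|m]; first by exfalso; lia.
  by rewrite /binz /= mulr0 mul0r bin_small ?mulr0n //; lia.
have -> : n%:Z - i%:Z - l%:Z = Posz (n - i - l) by lia.
have -> : (n - i - l = n.+1 - k - (i + l + 1 - k))%N by lia.
rewrite /binz bin_sub; last by lia.
rewrite -(sign_esym_coef hk); have -> : n%:Z - k%:Z + 1 = Posz (n.+1 - k) by lia.
by rewrite mulrAC mulr_natr.
Qed.

Lemma Ttmx_entry (l j : 'I_n.+1) :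
  Ttmx x l j = if (l <= j)%N then node_bern x (j - l)%N else 0.
Proof.
rewrite mxE; case: leqP => hlj; last by rewrite big1 // => k hk; exfalso; lia.
rewrite (eq_bigl (fun k : 'I_n.+1 => (k < (j - l).+1)%N)); last first.
  by move=> k /=; apply/idP/idP => h; lia.
have hle : ((j - l).+1 <= n.+1)%N by have := ltn_ord j; lia.
rewrite (big_ord_narrow hle) /node_bern /binom_transform; apply: eq_bigr => k _ /=.
have hk : (k <= n.+1)%N by have := ltn_ord k; lia.
have -> : j%:Z - l%:Z - k%:Z = Posz (j - l - k) by have := ltn_ord k; lia.
rewrite -(sign_esym_coef hk); have -> : n%:Z - k%:Z + 1 = Posz (n.+1 - k) by lia.
by rewrite /binz mulrAC mulr_natr.
Qed.

Lemma Tmx_entry (l j : 'I_n.+1) :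
  Tmx R n l j = if (l <= j)%N then binom_row R n (j - l)%N else 0.
Proof.
rewrite mxE; case: leqP => hlj; first by have -> : j%:Z - l%:Z = Posz (j - l) by lia.
by case E: (j%:Z - l%:Z) => [m|m] //; exfalso; lia.
Qed.

Lemma Hmx_entry (i l : 'I_n.+1) : Hmx R n i l = binom_row R n (i + l + 1)%N.
Proof. by rewrite mxE. Qed.

Lemma bezout_matrix_entry (i j : 'I_n.+1) :
  (Htmx x *m Tmx R n - Hmx R n *m Ttmx x) i j =
  bezoutian n (node_bern x) (binom_row R n) i j.
Proof.
rewrite !mxE /bezoutian -sumrB; apply: eq_bigr => l _.
by rewrite Htmx_entry Tmx_entry Hmx_entry Ttmx_entry.
Qed.

(* Row a of Vtilde M, paired with the column (t^j (1-t)^(n-j))_j, is the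
   Lagrange polynomial prod_(i != a) (t - x_i): the Bezoutian form
   specialised to (u, v, p, q) = (x_a, 1 - x_a, t, 1 - t). *)
Lemma bezoutian_row_poly (a : 'I_n.+1) :
  \sum_(i < n.+1) \sum_(j < n.+1)
    (bezoutian n (node_bern x) (binom_row R n) i j * hmon n (x a) (1 - x a) i)%:P *
      hmon n 'X (1 - 'X) j
  = \prod_(i < n.+1 | i != a) ('X - (x i)%:P).
Proof.
set u := (x a)%:P; set v := (1 - x a)%:P.
have lift i j : (bezoutian n (node_bern x) (binom_row R n) i j *
                   hmon n (x a) (1 - x a) i)%:P =
    bezoutian n (fun k => (node_bern x k)%:P) (fun k => (binom_row R n k)%:P) i j *
      hmon n u v i.
  by rewrite rmorphM rmorph_bezoutian /hmon rmorphM !rmorphXn.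
under eq_bigr => i _ do under eq_bigr => j _ do rewrite lift.
have uv1 : u + v = 1 by rewrite -rmorphD addrC subrK rmorph1.
have X1 : 'X + (1 - 'X) = 1 :> {poly R} by rewrite addrC subrK.
have det_uvX : u * (1 - 'X) - v * 'X = u - 'X.
  by rewrite /v rmorphB rmorph1 /= -/u; ring.
have uX_neq0 : u - 'X != 0 by rewrite -opprB oppr_eq0 polyXsubC_eq0.
apply: (mulfI uX_neq0); rewrite -[in LHS]det_uvX bezoutian_form; first last.
- by move=> k hk; rewrite binom_row_large // rmorph0.
- by move=> k hk; rewrite node_bern_large // rmorph0.
rewrite !hgen_node_bern // !hgen_binom_row // !mulr1 comp_polyCr comp_polyXr.
have -> : (node_poly x).[x a] = 0.
  by rewrite /node_poly horner_prod (bigD1 a) //= hornerXsubC subrr mul0r.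
by rewrite rmorph0 sub0r /node_poly (bigD1 a) //= -mulNr opprB.
Qed.

Lemma BVt_bezout_BVt :
  BVt x *m (Htmx x *m Tmx R n - Hmx R n *m Ttmx x) *m (BVt x)^T = Dmx x.
Proof.
apply/matrixP => a b; set M := _ - _.
transitivity (\sum_(i < n.+1) \sum_(j < n.+1)
    bezoutian n (node_bern x) (binom_row R n) i j *
    hmon n (x a) (1 - x a) i * hmon n (x b) (1 - x b) j).
  rewrite mxE exchange_big /=; apply: eq_bigr => j _.
  rewrite !mxE mulr_suml; apply: eq_bigr => i _.
  by rewrite -bezout_matrix_entry -/M !mxE /hmon; ring.
transitivity ((\sum_(i < n.+1) \sum_(j < n.+1)
    (bezoutian n (node_bern x) (binom_row R n) i j * hmon n (x a) (1 - x a) i)%:P *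
      hmon n 'X (1 - 'X) j).[x b]).
  rewrite horner_sum; apply: eq_bigr => i _; rewrite horner_sum; apply: eq_bigr => j _.
  by rewrite /hmon !hornerE.
rewrite bezoutian_row_poly horner_prod /Dmx !mxE eq_sym; case: eqP => [->|ab].
  by rewrite mulr1n; apply: eq_bigr => i _; rewrite hornerXsubC.
rewrite mulr0n (bigD1 b) /=; last exact/eqP.
by rewrite hornerXsubC subrr mul0r.
Qed.

End BezoutianMatrix.

Lemma BV_factor (R : fieldType) n (x : 'I_n.+1 -> R) : BV x = BVt x *m Deltamx R n.
Proof. by apply/matrixP => i j; rewrite mul_mx_diag !mxE; ring. Qed.

Lemma Dmx_unit (R : fieldType) n (x : 'I_n.+1 -> R) :
  injective x -> Dmx x \in unitmx.
Proof.
move=> x_inj; rewrite unitmxE det_diag unitfE prodf_seq_neq0.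
apply/allP => i _ /=; rewrite mxE prodf_seq_neq0; apply/allP => j _ /=.
by apply/implyP => ji; rewrite subr_eq0; apply: contra ji => /eqP/x_inj ->.
Qed.

(* Invertibility of Delta needs characteristic zero. *)
Lemma Deltamx_unit (R : numFieldType) n : Deltamx R n \in unitmx.
Proof.
rewrite unitmxE det_diag unitfE prodf_seq_neq0; apply/allP => i _ /=.
by rewrite mxE pnatr_eq0 -lt0n bin_gt0 -ltnS ltn_ord.
Qed.

Lemma BV_inverse (R : numFieldType) n (x : 'I_n.+1 -> R) : injective x ->
  invmx (BV x) =
    invmx (Deltamx R n) *m
      (Htmx x *m Tmx R n - Hmx R n *m Ttmx x) *m (BVt x)^T *m invmx (Dmx x).
Proof.
move=> x_inj; set Z := _ *m invmx (Dmx x).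
have BV_Z : BV x *m Z = 1%:M.
  rewrite BV_factor /Z !mulmxA -(mulmxA (BVt x)) mulmxV ?Deltamx_unit // mulmx1.
  by rewrite BVt_bezout_BVt mulmxV ?Dmx_unit.
have [BV_unit _] := mulmx1_unit BV_Z.
by rewrite -[LHS]mulmx1 -BV_Z mulmxA mulVmx // mul1mx.
Qed.

Theorem theorem2p7 (R : realFieldType) (n : nat) (x : 'I_n.+1 -> R) :
  0 <= x ord0 ->
  (forall i j : 'I_n.+1, (i < j)%N -> x i < x j) ->
  x ord_max <= 1 ->
  invmx (BV x) =
    invmx (Deltamx R n) *m
      (Htmx x *m Tmx R n - Hmx R n *m Ttmx x) *m (BVt x)^T *m invmx (Dmx x).
Proof.
move=> _ x_incr _; apply: BV_inverse => i j.
case: (ltngtP i j) => [ij|ji|/val_inj //].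
- by move/eqP; rewrite lt_eqF // x_incr.
- by move/eqP; rewrite gt_eqF // x_incr.
Qed.
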